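(* Let $\phi:\mathbb{M}_n\to\mathbb{M}_m$ be a positive linear map, and let $\phi^*:\mathbb{M}_m\to\mathbb{M}_n$ denote its adjoint with respect to the Hilbert–Schmidt inner product $\langle A,B\rangle=\mathrm{Tr}[A^*B]$. Then $\phi$ is a generalized Schwarz map if and only if for every pair $(K,X)\in \mathbb{M}_m\times\mathbb{M}_m^+$ with $\ker(X)\subseteq\ker(K^* )$ we have \[ \mathrm{Tr}[\phi^*(K^*X^{+}K)] \geq \mathrm{Tr}[\phi^*(K)^*\phi^*(X)^{+}\phi^*(K)]. \]
   Context: $\mathbb{M}_n$ denotes the $n\times n$ complex matrices and $\mathbb{M}_n^+$ the positive semidefinite ones; $\mathbf{1}_n$ is the identity. For a matrix $Z$, $Z^+$ denotes its Moore–Penrose generalized inverse. A linear map $\phi:\mathbb{M}_n\to\mathbb{M}_m$ is called positive if it maps $\mathbb{M}_n^+$ into $\mathbb{M}_m^+$. A linear map $\phi:\mathbb{M}_n\to\mathbb{M}_m$ is called a generalized Schwarz map if for all $K\in\mathbb{M}_n$ the block matrix $\begin{pmatrix}\phi(\mathbf{1}_n) & \phi(K)\\ \phi(K)^* & \phi(K^*K)\end{pmatrix}$ is positive semidefinite. *)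

From HB Require Import structures.
From mathcomp Require Import all_boot all_order all_algebra.
From mathcomp Require Import sesquilinear spectral.
From Stdlib Require Import ClassicalEpsilon.
Set Implicit Arguments. Unset Strict Implicit. Unset Printing Implicit Defensive.
Import Order.TTheory GRing.Theory Num.Theory.
Local Open Scope ring_scope.
Local Open Scope sesquilinear_scope.

(* Complex scalars: an arbitrary numeric algebraically closed field C
   (e.g. the complex numbers); A ^t* is the conjugate transpose A^*. *)

(* Positive semidefinite: v^* A v >= 0 for every vector v
   (over C this also forces A to be Hermitian). *)
Definition psdmx (C : numClosedFieldType) (n : nat) (A : 'M[C]_n) : Prop :=
  forall v : 'cV[C]_n, 0 <= (v ^t* *m A *m v) 0 0.

Definition positive_map (C : numClosedFieldType) (n m : nat)
  (phi : 'M[C]_n -> 'M[C]_m) : Prop :=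
  forall A : 'M[C]_n, psdmx A -> psdmx (phi A).

Definition gen_schwarz (C : numClosedFieldType) (n m : nat)
  (phi : 'M[C]_n -> 'M[C]_m) : Prop :=
  forall K : 'M[C]_n,
    psdmx (block_mx (phi 1%:M) (phi K) ((phi K) ^t*) (phi (K ^t* *m K))).

Definition penrose (C : numClosedFieldType) (n : nat) (A B : 'M[C]_n) : Prop :=
  [/\ A *m B *m A = A, B *m A *m B = B,
      (A *m B) ^t* = A *m B & (B *m A) ^t* = B *m A].

(* Moore–Penrose generalized inverse Z^+ : the (unique, always existing)
   matrix satisfying the Penrose conditions. *)
Definition mpinv (C : numClosedFieldType) (n : nat) (A : 'M[C]_n) : 'M[C]_n :=
  epsilon (inhabits 0) (penrose A).

Definition hs_adjoint (C : numClosedFieldType) (n m : nat)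
  (phi : 'M[C]_n -> 'M[C]_m) (psi : 'M[C]_m -> 'M[C]_n) : Prop :=
  forall (A : 'M[C]_m) (B : 'M[C]_n), \tr (A ^t* *m phi B) = \tr ((psi A) ^t* *m B).

From HB Require Import structures.
From mathcomp Require Import all_boot all_order all_algebra.
From mathcomp Require Import sesquilinear spectral.
From Stdlib Require Import ClassicalEpsilon.
From mathcomp Require Import ring.
Import Order.TTheory GRing.Theory Num.Theory.
Local Open Scope ring_scope.
Local Open Scope sesquilinear_scope.
Set Implicit Arguments. Unset Strict Implicit.

(* Write psi for the adjoint phis of phi and A^* for conjugate transposes.
   If phi is a generalized Schwarz map, its block at Z = psi(K)^* psi(X)^+
   pairs nonnegatively, under the trace, with the Schur block
   [[K^* X^+ K, -K^*], [-K, X]], which is positive semidefinite because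
   ker X <= ker K^*.  Moving phi to its adjoint, this pairing is
   Tr psi(K^* X^+ K) - Tr (psi(K)^* psi(X)^+ psi(K)).
   Conversely, at (x, y) the quadratic form of the Schwarz block is
   Tr psi(x x^* ) + 2 Re Tr (H^* K) + Tr (K psi(y y^* ) K^* ) with
   H = psi(x y^* ).  The trace inequality at K = y x^*, X = y y^* + e 1
   bounds Tr (H S^+ H^* ) by Tr psi(x x^* ), where S = psi(X), and
   Tr ((K + H S^+) S (K + H S^+)^* ) >= 0 then gives the form up to
   e Tr (K psi(1) K^* ); let e -> 0.  Completing the square needs
   ker S <= ker H, which holds because ker psi(1) <= ker psi(Z) for the
   positive map psi. *)

Lemma mxtraceN (R : pzRingType) n (A : 'M[R]_n) : \tr (- A) = - \tr A.
Proof. exact: raddfN. Qed.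

Section ConjTranspose.
Variable C : numClosedFieldType.

Lemma trmxC_mul m n p (A : 'M[C]_(m, n)) (B : 'M[C]_(n, p)) :
  (A *m B) ^t* = B ^t* *m A ^t*.
Proof. by rewrite trmx_mul map_mxM. Qed.

Lemma trmxCD m n (A B : 'M[C]_(m, n)) : (A + B) ^t* = A ^t* + B ^t*.
Proof. by rewrite linearD map_mxD. Qed.

Lemma trmxCN m n (A : 'M[C]_(m, n)) : (- A) ^t* = - A ^t*.
Proof. by rewrite linearN map_mxN. Qed.

Lemma trmxCZ m n a (A : 'M[C]_(m, n)) : (a *: A) ^t* = a^* *: A ^t*.
Proof. by rewrite linearZ map_mxZ. Qed.

Lemma trmxC1 n : (1%:M : 'M[C]_n) ^t* = 1%:M.
Proof. by rewrite trmx1 map_mx1. Qed.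

Lemma trmxC_row_mx m n1 n2 (A : 'M[C]_(m, n1)) (B : 'M[C]_(m, n2)) :
  (row_mx A B) ^t* = col_mx (A ^t*) (B ^t*).
Proof. by rewrite tr_row_mx map_col_mx. Qed.

Lemma trmxC_col_mx m1 m2 n (A : 'M[C]_(m1, n)) (B : 'M[C]_(m2, n)) :
  (col_mx A B) ^t* = row_mx (A ^t*) (B ^t*).
Proof. by rewrite tr_col_mx map_row_mx. Qed.

Lemma mxtrace_trmxC n (A : 'M[C]_n) : \tr (A ^t*) = (\tr A)^*.
Proof. by rewrite /mxtrace rmorph_sum; apply: eq_bigr => i _; rewrite !mxE. Qed.

Lemma mxtrace_mul_delta n (A : 'M[C]_n) i j : \tr (A *m delta_mx i j) = A j i.
Proof.
rewrite -(mul_delta_mx (0 : 'I_1)) mulmxA mxtrace_mulC /mxtrace big_ord1.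
by rewrite -rowE -colE !mxE.
Qed.

Lemma eq_mx_mxtrace n (A B : 'M[C]_n) :
  (forall Z, \tr (A *m Z) = \tr (B *m Z)) -> A = B.
Proof.
by move=> eqAB; apply/matrixP => i j; have := eqAB (delta_mx j i); rewrite !mxtrace_mul_delta.
Qed.

Lemma dot_cVE n (v : 'cV[C]_n) : (v ^t* *m v) 0 0 = dotmx (v ^t*) (v ^t*).
Proof. by rewrite dotmxE trmxCK. Qed.

Lemma dot_cV_eq0 n (v : 'cV[C]_n) : ((v ^t* *m v) 0 0 == 0) = (v == 0).
Proof.
rewrite dot_cVE dnorm_eq0; apply/eqP/eqP => [|->]; last by rewrite trmx0 map_mx0.
by move/(congr1 (fun u => u ^t*)); rewrite trmxCK trmx0 map_mx0.
Qed.

End ConjTranspose.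

Section Form.
Variables (C : numClosedFieldType) (n : nat).
Implicit Types (A B : 'M[C]_n) (u w : 'cV[C]_n).

Definition sesq A u w : C := (u ^t* *m A *m w) 0 0.

Lemma sesqD A B u w : sesq (A + B) u w = sesq A u w + sesq B u w.
Proof. by rewrite /sesq mulmxDr mulmxDl mxE. Qed.

Lemma sesqN A u w : sesq (- A) u w = - sesq A u w.
Proof. by rewrite /sesq mulmxN mulNmx mxE. Qed.

Lemma sesqZ a A u w : sesq (a *: A) u w = a * sesq A u w.
Proof. by rewrite /sesq -scalemxAr -scalemxAl mxE. Qed.

Lemma sesq_trmxC A u w : sesq (A ^t*) u w = (sesq A w u)^*.
Proof.
have -> : (sesq A w u)^* = ((w ^t* *m A *m u) ^t*) 0 0.
  by rewrite /sesq [RHS]mxE [in RHS]mxE.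
by rewrite /sesq !trmxC_mul trmxCK mulmxA.
Qed.

Lemma mxtrace_mul_rank1 A u w : \tr (A *m (u *m w ^t*)) = sesq A w u.
Proof. by rewrite mulmxA mxtrace_mulC /mxtrace big_ord1 /sesq mulmxA. Qed.

End Form.

Lemma sesq_block (C : numClosedFieldType) m (A11 A12 A21 A22 : 'M[C]_m) x y :
  sesq (block_mx A11 A12 A21 A22) (col_mx x y) (col_mx x y) =
  sesq A11 x x + sesq A21 y x + sesq A12 x y + sesq A22 y y.
Proof.
by rewrite /sesq trmxC_col_mx mul_row_block mul_row_col !mulmxDl !mxE !addrA.
Qed.

Section Psd.
Variable C : numClosedFieldType.

Lemma linear_rank1_eq0 (V : lmodType C) n (h : 'M[C]_n -> V) :
  linear h -> (forall u : 'cV[C]_n, h (u *m u ^t*) = 0) -> forall Z, h Z = 0.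
Proof.
move=> h_lin h0 Z.
pose hL : {linear 'M[C]_n -> V} := HB.pack h (GRing.isLinear.Build _ _ _ _ h h_lin).
have {}h0 (u : 'cV[C]_n) : hL (u *m u ^t*) = 0 := h0 u.
have polar (u w : 'cV[C]_n) : hL (u *m w ^t*) = 0.
  have e1 := h0 (u + w); have e2 := h0 (u + 'i *: w).
  rewrite trmxCD mulmxDl !mulmxDr !linearD !h0 add0r addr0 in e1.
  rewrite trmxCD trmxCZ mulmxDl !mulmxDr -!scalemxAl -!scalemxAr in e2.
  rewrite !linearD !(linearZ_LR hL) !h0 !scaler0 add0r addr0 conjCi in e2.
  have e3 : hL (w *m u ^t*) = - hL (u *m w ^t*) by apply/eqP; rewrite -addr_eq0 addrC e1.
  move/eqP: e2; rewrite e3 scalerN scaleNr -opprD oppr_eq0 -mulr2n -scaler_nat.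
  by rewrite scaler_eq0 pnatr_eq0 /= scaler_eq0 (negbTE (neq0Ci _)) => /eqP.
change (hL Z = 0); rewrite [Z]matrix_sum_delta linear_sum big1 // => i _.
rewrite linear_sum big1 // => j _; rewrite (linearZ_LR hL) -(mul_delta_mx (0 : 'I_1)).
have -> : delta_mx 0 j = (delta_mx j 0 : 'cV[C]_n) ^t* by rewrite trmx_delta map_delta_mx.
by rewrite polar scaler0.
Qed.

Lemma gram_psd p n (G : 'M[C]_(p, n)) : psdmx (G ^t* *m G).
Proof. by move=> v; rewrite mulmxA -trmxC_mul -mulmxA dot_cVE dnorm_ge0. Qed.

Lemma psd_rank1 n (u : 'cV[C]_n) : psdmx (u *m u ^t*).
Proof. by have := gram_psd (u ^t*); rewrite trmxCK. Qed.

Lemma psd1 n : psdmx (1%:M : 'M[C]_n).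
Proof. by have := gram_psd (1%:M : 'M[C]_n); rewrite trmxC1 mulmx1. Qed.

Lemma psdD n (A B : 'M[C]_n) : psdmx A -> psdmx B -> psdmx (A + B).
Proof.
by move=> hA hB u; rewrite -/(sesq _ u u) sesqD; apply: addr_ge0; [apply: hA | apply: hB].
Qed.

Lemma psdZ n a (A : 'M[C]_n) : 0 <= a -> psdmx A -> psdmx (a *: A).
Proof.
by move=> a_ge0 hA u; rewrite -/(sesq _ u u) sesqZ; apply: mulr_ge0 => //; apply: hA.
Qed.

Lemma psd_herm n (A : 'M[C]_n) : psdmx A -> A ^t* = A.
Proof.
move=> hA; apply: eq_mx_mxtrace => Z; apply/eqP; rewrite -subr_eq0; apply/eqP.
apply: (@linear_rank1_eq0 C^o _ (fun Z => \tr (A ^t* *m Z) - \tr (A *m Z))) => [a X Y|u].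
  rewrite /= !mulmxDr -!scalemxAr !mxtraceD !mxtraceZ -[a *: _]/(a * _).
  by rewrite mulrBr opprD addrACA.
rewrite (mxtrace_mul_rank1 (A ^t*)) mxtrace_mul_rank1 sesq_trmxC conj_Creal ?subrr //.
exact: ger0_real (hA u).
Qed.

Lemma psd_spectral n (A : 'M[C]_n) : psdmx A ->
  exists P : 'M[C]_n, exists d : 'rV[C]_n,
    [/\ P *m P ^t* = 1%:M, P ^t* *m P = 1%:M, A = P ^t* *m diag_mx d *m P &
        forall i, 0 <= d 0 i].
Proof.
move=> hA.
have A_herm : A \is hermsymmx by apply/is_hermitianmxP; rewrite expr0 scale1r psd_herm.
have /orthomx_spectralP eA := hermitian_normalmx A_herm.
have P_unitary := spectral_unitarymx A.
rewrite invmx_unitary // in eA.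
have PPt : spectralmx A *m (spectralmx A) ^t* = 1%:M by apply/unitarymxP.
have PtP : (spectralmx A) ^t* *m spectralmx A = 1%:M.
  by rewrite -invmx_unitary // mulVmx // spectral_unit.
move: (spectralmx A) (spectral_diag A) PPt PtP eA => P d PPt PtP eA.
exists P, d; split => // i.
have := hA (P ^t* *m delta_mx i 0).
rewrite eA trmxC_mul trmxCK !mulmxA -(mulmxA _ P) PPt mulmx1 -!(mulmxA _ P) PPt mulmx1.
by rewrite trmx_delta map_delta_mx -rowE -colE !mxE eqxx mulr1n.
Qed.

Lemma psd_gram n (A : 'M[C]_n) : psdmx A -> exists F : 'M[C]_n, A = F ^t* *m F.
Proof.
move=> /psd_spectral [P [d [_ _ -> d_ge0]]].
exists (diag_mx (\row_j sqrtC (d 0 j)) *m P).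
rewrite trmxC_mul tr_diag_mx map_diag_mx mulmxA -[in RHS](mulmxA (P ^t*)) mulmx_diag.
congr (_ *m diag_mx _ *m _); apply/rowP => j; rewrite !mxE /=.
by rewrite conj_Creal ?sqrtC_real // -expr2 sqrtCK.
Qed.

Lemma psd_ker n (A : 'M[C]_n) (w : 'cV[C]_n) : psdmx A -> sesq A w w = 0 -> A *m w = 0.
Proof.
move=> /psd_gram [F ->]; rewrite /sesq mulmxA -trmxC_mul -mulmxA => /eqP.
by rewrite dot_cV_eq0 => /eqP Fw0; rewrite -mulmxA Fw0 mulmx0.
Qed.

Lemma psd_ker_addr n (A B : 'M[C]_n) (w : 'cV[C]_n) : psdmx A -> psdmx B ->
  (A + B) *m w = 0 -> B *m w = 0.
Proof.
move=> hA hB ABw0; apply: psd_ker => //.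
have /eqP : sesq (A + B) w w = 0 by rewrite /sesq -mulmxA ABw0 mulmx0 mxE.
by rewrite sesqD paddr_eq0 => [/andP[_ /eqP]| |] //; [apply: hA | apply: hB].
Qed.

Lemma mxtrace_sandwich_ge0 k n (F : 'M[C]_(k, n)) (B : 'M[C]_n) :
  psdmx B -> 0 <= \tr (F *m B *m F ^t*).
Proof.
move=> hB; apply: sumr_ge0 => i _.
have -> : (F *m B *m F ^t*) i i = sesq B (col i (F ^t*)) (col i (F ^t*)).
  rewrite /sesq.
  have -> : (col i (F ^t*)) ^t* = row i F by apply/matrixP => a b; rewrite !mxE conjCK.
  by rewrite -!row_mul colE mulmxA -colE !mxE.
exact: hB.
Qed.

Lemma mxtrace_psd_ge0 n (A : 'M[C]_n) : psdmx A -> 0 <= \tr A.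
Proof. by move=> /(mxtrace_sandwich_ge0 1%:M); rewrite trmxC1 mulmx1 mul1mx. Qed.

Lemma mxtrace_psdM_ge0 n (A B : 'M[C]_n) : psdmx A -> psdmx B -> 0 <= \tr (A *m B).
Proof.
by move=> /psd_gram [F ->] hB; rewrite -mulmxA mxtrace_mulC mxtrace_sandwich_ge0.
Qed.

Lemma psd_dot_sub_rank1 n (u : 'cV[C]_n) :
  psdmx ((u ^t* *m u) 0 0 *: 1%:M - u *m u ^t*).
Proof.
move=> v; rewrite -/(sesq _ v v) sesqD sesqN sesqZ subr_ge0 /sesq mulmx1.
have /= := (CauchySchwarz (@dotmx C n) (v ^t*) (u ^t*)).1.
rewrite -!dot_cVE dotmxE trmxCK normCK mulrC.
have -> : ((v ^t* *m u) 0 0)^* = (u ^t* *m v) 0 0.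
  by rewrite -[in RHS](trmxCK v) -trmxC_mul [RHS]mxE [in RHS]mxE.
move=> CS; rewrite !mulmxA -(mulmxA _ (u ^t*)) [X in X <= _]mxE big_ord1.
by rewrite mulrC [X in _ <= X]mulrC.
Qed.

End Psd.

Section MoorePenrose.
Variables (C : numClosedFieldType) (n : nat).
Implicit Types A B D : 'M[C]_n.

Lemma penrose_exists A : psdmx A -> exists B, penrose A B.
Proof.
move=> /psd_spectral [P [d [PPt _ -> d_ge0]]].
exists (P ^t* *m diag_mx (\row_j (d 0 j)^-1) *m P).
have conjd_mul (f g : 'rV[C]_n) :
    P ^t* *m diag_mx f *m P *m (P ^t* *m diag_mx g *m P) =
    P ^t* *m diag_mx (\row_j (f 0 j * g 0 j)) *m P.
  by rewrite !mulmxA -(mulmxA _ P) PPt mulmx1 -(mulmxA _ (diag_mx f)) mulmx_diag.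
have conjd_herm (f : 'rV[C]_n) : (forall j, f 0 j \is Num.real) ->
    (P ^t* *m diag_mx f *m P) ^t* = P ^t* *m diag_mx f *m P.
  move=> f_real; rewrite !trmxC_mul trmxCK tr_diag_mx map_diag_mx mulmxA.
  by congr (_ *m diag_mx _ *m _); apply/rowP => j; rewrite !mxE /= conj_Creal.
have d_real j : d 0 j \is Num.real by rewrite ger0_real.
split; rewrite !conjd_mul.
- congr (_ *m diag_mx _ *m _); apply/rowP => j; rewrite !mxE.
  by have [->|d_neq0] := eqVneq (d 0 j) 0; rewrite ?mulr0 // divff // mul1r.
- congr (_ *m diag_mx _ *m _); apply/rowP => j; rewrite !mxE.
  by have [->|d_neq0] := eqVneq (d 0 j) 0; rewrite ?invr0 ?mulr0 // mulVf // mul1r.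
- by rewrite conjd_herm // => j; rewrite !mxE rpredM ?rpredV.
- by rewrite conjd_herm // => j; rewrite !mxE rpredM ?rpredV.
Qed.

Lemma mpinvP A : psdmx A -> penrose A (mpinv A).
Proof. by move=> /penrose_exists [B pAB]; apply: epsilon_spec; exists B. Qed.

Lemma penrose_uniq A B D : penrose A B -> penrose A D -> B = D.
Proof.
move=> [ABA BAB AB_herm BA_herm] [ADA DAD AD_herm DA_herm].
have eB : B = B *m A *m D.
  have ABE : A *m B = A *m D *m A *m B by rewrite ADA.
  rewrite -{1}BAB -mulmxA -AB_herm ABE -(mulmxA (A *m D)) trmxC_mul AB_herm AD_herm.
  by rewrite !mulmxA BAB.
have eD : D = B *m A *m D.
  have DAE : D *m A = D *m A *m B *m A.
    by rewrite -(mulmxA D A B) -(mulmxA D (A *m B) A) ABA.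
  rewrite -{1}DAD -DA_herm DAE -(mulmxA (D *m A) B A) trmxC_mul BA_herm DA_herm.
  by rewrite -(mulmxA (B *m A) (D *m A) D) DAD.
by rewrite eD -eB.
Qed.

Lemma penrose_herm A B : A ^t* = A -> penrose A B -> B ^t* = B.
Proof.
move=> A_herm pAB; apply: (penrose_uniq _ pAB).
case: pAB => ABA BAB AB_herm BA_herm; split.
- by have := congr1 (fun X => X ^t*) ABA; rewrite /= !trmxC_mul A_herm mulmxA.
- by have := congr1 (fun X => X ^t*) BAB; rewrite /= !trmxC_mul A_herm mulmxA.
- by rewrite trmxC_mul trmxCK A_herm -BA_herm trmxC_mul A_herm.
- by rewrite trmxC_mul trmxCK A_herm -AB_herm trmxC_mul A_herm.
Qed.

Lemma penrose_comm A B : A ^t* = A -> penrose A B -> A *m B = B *m A.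
Proof.
move=> A_herm pAB; case: (pAB) => _ _ AB_herm _.
by rewrite -AB_herm trmxC_mul A_herm (penrose_herm A_herm pAB).
Qed.

Lemma ker_sub_mulmx p q (N : 'M[C]_(p, n)) A (M : 'M[C]_(n, q)) :
  (forall v : 'cV[C]_n, A *m v = 0 -> N *m v = 0) -> A *m M = 0 -> N *m M = 0.
Proof.
move=> kerAN AM0; apply/matrixP => i j.
have /(congr1 (fun X : 'cV[C]_p => X i 0)) : N *m col j M = 0.
  by apply: kerAN; rewrite colE mulmxA AM0 mul0mx.
by rewrite colE mulmxA -colE !mxE.
Qed.

Lemma penrose_ker p (N : 'M[C]_(p, n)) A B : penrose A B ->
  (forall v : 'cV[C]_n, A *m v = 0 -> N *m v = 0) -> N *m B *m A = N.
Proof.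
move=> [ABA _ _ _] kerAN; apply/eqP; rewrite -subr_eq0 -{2}[N]mulmx1 -mulmxA -mulmxBr.
by apply/eqP/(ker_sub_mulmx kerAN); rewrite mulmxBr mulmx1 mulmxA ABA subrr.
Qed.

Lemma penrose_ker_trmxC p (N : 'M[C]_(p, n)) A B : A ^t* = A -> penrose A B ->
  (forall v : 'cV[C]_n, A *m v = 0 -> N *m v = 0) -> A *m B *m N ^t* = N ^t*.
Proof.
move=> A_herm pAB /(penrose_ker pAB) /(congr1 (fun X => X ^t*)).
by rewrite /= !trmxC_mul A_herm (penrose_herm A_herm pAB) mulmxA.
Qed.

Lemma penrose_eigen A B (y : 'cV[C]_n) a : A ^t* = A -> penrose A B ->
  A *m y = a *: y -> a != 0 -> B *m y = a^-1 *: y.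
Proof.
move=> A_herm pAB Ay a_neq0.
have ABy : A *m B *m y = y.
  case: (pAB) => ABA _ _ _; apply: (scalerI a_neq0).
  by rewrite -Ay scalemxAr -Ay !mulmxA ABA.
transitivity (a^-1 *: (B *m (A *m y))).
  by rewrite Ay -scalemxAr scalerA mulVf // scale1r.
by rewrite mulmxA -(penrose_comm A_herm pAB) ABy.
Qed.

End MoorePenrose.

Section PositiveMap.
Variables (C : numClosedFieldType) (n m : nat) (phi : {linear 'M[C]_n -> 'M[C]_m}).
Hypothesis phi_pos : positive_map phi.

Lemma positive_map_herm Z : phi (Z ^t*) = (phi Z) ^t*.
Proof.
rewrite -[LHS]trmxCK; congr (_ ^t*); apply/eqP; rewrite -subr_eq0; apply/eqP; move: Z.
apply: (@linear_rank1_eq0 _ _ _ (fun Z => (phi (Z ^t*)) ^t* - phi Z)) => [a X Y|u].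
  by rewrite /= trmxCD trmxCZ !(linearP phi) trmxCD trmxCZ conjCK scalerBr opprD addrACA.
by rewrite (trmxC_mul u) trmxCK psd_herm ?subrr //; apply/phi_pos/psd_rank1.
Qed.

(* Since u u^* <= (u^* u) 1, w is in the kernel of every phi (u u^* ),
   and these u u^* span all matrices. *)
Lemma positive_map_ker (w : 'cV[C]_m) Z : phi 1%:M *m w = 0 -> phi Z *m w = 0.
Proof.
move=> phi1w0; move: Z.
have phi1w : sesq (phi 1%:M) w w = 0 by rewrite /sesq -mulmxA phi1w0 mulmx0 mxE.
have rank1 (u : 'cV[C]_n) : phi (u *m u ^t*) *m w = 0.
  apply: psd_ker; first exact/phi_pos/psd_rank1.
  apply/le_anti; rewrite (phi_pos (psd_rank1 u) w) andbT.
  have := phi_pos (psd_dot_sub_rank1 u) w.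
  by rewrite -/(sesq _ w w) linearB linearZ /= sesqD sesqN sesqZ phi1w mulr0 add0r oppr_ge0.
apply: (@linear_rank1_eq0 _ _ _ (fun Z => phi Z *m w)) => // a X Y.
by rewrite /= linearP mulmxDl -scalemxAl.
Qed.

End PositiveMap.

Section HSAdjoint.
Variables (C : numClosedFieldType) (n m : nat).
Variables (phi : {linear 'M[C]_n -> 'M[C]_m}) (phis : 'M[C]_m -> 'M[C]_n).
Hypotheses (phi_pos : positive_map phi) (phis_adj : hs_adjoint phi phis).

Lemma hs_adjointD A B : phis (A + B) = phis A + phis B.
Proof.
rewrite -[LHS]trmxCK -[RHS]trmxCK; congr (_ ^t*); apply: eq_mx_mxtrace => X.
by rewrite -phis_adj trmxCD mulmxDl mxtraceD !phis_adj -mxtraceD -mulmxDl -trmxCD.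
Qed.

Lemma hs_adjointZ a A : phis (a *: A) = a *: phis A.
Proof.
rewrite -[LHS]trmxCK -[RHS]trmxCK; congr (_ ^t*); apply: eq_mx_mxtrace => X.
by rewrite -phis_adj trmxCZ -scalemxAl mxtraceZ phis_adj trmxCZ -scalemxAl mxtraceZ.
Qed.

Lemma hs_adjoint_linear : linear phis.
Proof. by move=> a A B; rewrite hs_adjointD hs_adjointZ. Qed.

Lemma hs_adjoint_herm A : phis (A ^t*) = (phis A) ^t*.
Proof.
rewrite -[LHS]trmxCK; congr (_ ^t*); apply: eq_mx_mxtrace => X.
rewrite -phis_adj trmxCK; symmetry.
rewrite -[LHS]conjCK -mxtrace_trmxC trmxC_mul mxtrace_mulC -phis_adj.
by rewrite (positive_map_herm phi_pos) -trmxC_mul mxtrace_trmxC conjCK mxtrace_mulC.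
Qed.

Lemma mxtrace_hs_adjoint A B : \tr (A *m phi B) = \tr (phis A *m B).
Proof. by rewrite -[A in LHS]trmxCK phis_adj hs_adjoint_herm trmxCK. Qed.

Lemma sesq_hs_adjoint B u w : sesq (phi B) u w = \tr (phis (w *m u ^t*) *m B).
Proof. by rewrite -mxtrace_mul_rank1 mxtrace_mulC mxtrace_hs_adjoint. Qed.

Lemma hs_adjoint_pos : positive_map phis.
Proof.
move=> A hA v; rewrite -/(sesq _ v v) -mxtrace_mul_rank1 -mxtrace_hs_adjoint.
by apply: mxtrace_psdM_ge0 => //; apply/phi_pos/psd_rank1.
Qed.

Lemma hs_adjoint_ker (w : 'cV[C]_n) Z : phis 1%:M *m w = 0 -> phis Z *m w = 0.
Proof.
pose psi : {linear 'M[C]_m -> 'M[C]_n} :=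
  HB.pack phis (GRing.isLinear.Build _ _ _ _ phis hs_adjoint_linear).
exact: (positive_map_ker (phi := psi) hs_adjoint_pos).
Qed.

End HSAdjoint.

Section Schur.
Variables (C : numClosedFieldType) (n : nat).

Lemma psd_schur_block (K X : 'M[C]_n) : psdmx X ->
  (forall v : 'cV[C]_n, X *m v = 0 -> K ^t* *m v = 0) ->
  psdmx (block_mx (K ^t* *m mpinv X *m K) (- K ^t*) (- K) X).
Proof.
move=> hX kerXK.
have pX := mpinvP hX; have X_herm := psd_herm hX.
have Xp_herm := penrose_herm X_herm pX.
have KXpX : K ^t* *m mpinv X *m X = K ^t* := penrose_ker pX kerXK.
have XXpK : X *m mpinv X *m K = K.
  by rewrite -[K in RHS]trmxCK -(penrose_ker_trmxC X_herm pX kerXK) trmxCK.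
have [F XE] := psd_gram hX.
suff -> : block_mx (K ^t* *m mpinv X *m K) (- K ^t*) (- K) X =
    (row_mx (F *m mpinv X *m K) (- F)) ^t* *m row_mx (F *m mpinv X *m K) (- F).
  exact: gram_psd.
rewrite trmxC_row_mx mul_col_row !trmxC_mul trmxCN Xp_herm !mulmxN !mulNmx opprK.
congr block_mx.
- by rewrite !mulmxA -(mulmxA _ (F ^t*)) -XE KXpX.
- by rewrite !mulmxA -(mulmxA _ (F ^t*)) -XE KXpX.
- by rewrite !mulmxA -XE XXpK.
- exact: XE.
Qed.

Lemma schur_mxtrace_ge0 (S H K : 'M[C]_n) : psdmx S ->
  (forall v : 'cV[C]_n, S *m v = 0 -> H *m v = 0) ->
  0 <= \tr (K *m S *m K ^t*) + \tr (H ^t* *m K) + (\tr (H ^t* *m K))^* +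
       \tr (H *m mpinv S *m H ^t*).
Proof.
move=> hS kerSH.
have pS := mpinvP hS; have S_herm := psd_herm hS.
have HSpS : H *m mpinv S *m S = H := penrose_ker pS kerSH.
have SSpH : S *m mpinv S *m H ^t* = H ^t* := penrose_ker_trmxC S_herm pS kerSH.
have := mxtrace_sandwich_ge0 (K + H *m mpinv S) hS.
rewrite trmxCD trmxC_mul (penrose_herm S_herm pS) mulmxDr !mulmxDl HSpS !mxtraceD.
rewrite -[K *m S *m (_ *m _)]mulmxA (mulmxA S) SSpH [\tr (K *m _)]mxtrace_mulC.
rewrite [H *m (_ *m _)]mulmxA.
have -> : \tr (H *m K ^t*) = (\tr (H ^t* *m K))^*.
  by rewrite -mxtrace_trmxC trmxC_mul trmxCK mxtrace_mulC.
by rewrite addrA (addrAC _ (_^*)).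
Qed.

End Schur.

Section RankOneRegularization.
Variables (C : numClosedFieldType) (n : nat) (x y : 'cV[C]_n) (e : C).
Hypothesis e_gt0 : 0 < e.

Lemma psd_rank1_reg : psdmx (y *m y ^t* + e *: 1%:M).
Proof. by apply: psdD; [apply: psd_rank1 | apply: psdZ; [apply: ltW | apply: psd1]]. Qed.

Lemma rank1_reg_gt0 : 0 < (y ^t* *m y) 0 0 + e.
Proof. by apply: ltr_wpDl => //; have := @psd1 C n y; rewrite mulmx1. Qed.

Lemma rank1_reg_eigen :
  (y *m y ^t* + e *: 1%:M) *m y = ((y ^t* *m y) 0 0 + e) *: y.
Proof.
rewrite mulmxDl -mulmxA [X in y *m X]mx11_scalar mul_mx_scalar -scalemxAl mul1mx.
by rewrite scalerDl.
Qed.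

Lemma rank1_reg_ker (w : 'cV[C]_n) :
  (y *m y ^t* + e *: 1%:M) *m w = 0 -> (y *m x ^t*) ^t* *m w = 0.
Proof.
have yX : y ^t* *m (y *m y ^t* + e *: 1%:M) = ((y ^t* *m y) 0 0 + e) *: y ^t*.
  have := congr1 (fun M => M ^t*) rank1_reg_eigen.
  rewrite /= trmxC_mul trmxCZ psd_herm; last exact: psd_rank1_reg.
  by rewrite conj_Creal // gtr0_real // rank1_reg_gt0.
move=> Xw0; have /eqP : y ^t* *m ((y *m y ^t* + e *: 1%:M) *m w) = 0.
  by rewrite Xw0 mulmx0.
rewrite mulmxA yX -scalemxAl scaler_eq0 gt_eqF ?rank1_reg_gt0 //= => /eqP yw0.
by rewrite trmxC_mul trmxCK -mulmxA yw0 mulmx0.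
Qed.

Lemma rank1_reg_mpinv :
  (y *m x ^t*) ^t* *m mpinv (y *m y ^t* + e *: 1%:M) *m (y *m x ^t*) =
  ((y ^t* *m y) 0 0 / ((y ^t* *m y) 0 0 + e)) *: (x *m x ^t*).
Proof.
have Xpy : mpinv (y *m y ^t* + e *: 1%:M) *m y = ((y ^t* *m y) 0 0 + e)^-1 *: y.
  apply: penrose_eigen rank1_reg_eigen (lt0r_neq0 rank1_reg_gt0).
    exact/psd_herm/psd_rank1_reg.
  exact/mpinvP/psd_rank1_reg.
rewrite trmxC_mul trmxCK -!mulmxA (mulmxA (mpinv _)) Xpy -scalemxAl -!scalemxAr.
rewrite (mulmxA (y ^t*)) [X in x *m (X *m _)]mx11_scalar mul_scalar_mx -scalemxAr scalerA.
by rewrite mulrC.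
Qed.

End RankOneRegularization.

Lemma ge0_addr_eps (F : numFieldType) (a t : F) :
  0 <= t -> (forall e, 0 < e -> 0 <= a + e * t) -> 0 <= a.
Proof.
move=> t_ge0 a_eps; have [t0|t_neq0] := eqVneq t 0.
  by have := a_eps 1 ltr01; rewrite t0 mulr0 addr0.
have t_gt0 : 0 < t by rewrite lt_def t_neq0.
apply/ler_addgt0Pr => e e_gt0.
by have := a_eps (e / t) (divr_gt0 e_gt0 t_gt0); rewrite divfK.
Qed.

Definition mpinv_trace_ineq (C : numClosedFieldType) n m
    (psi : 'M[C]_m -> 'M[C]_n) : Prop :=
  forall K X : 'M[C]_m, psdmx X ->
    (forall v : 'cV[C]_m, X *m v = 0 -> K ^t* *m v = 0) ->
    \tr ((psi K) ^t* *m mpinv (psi X) *m psi K) <= \tr (psi (K ^t* *m mpinv X *m K)).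

Section GenSchwarz.
Variables (C : numClosedFieldType) (n m : nat).
Variables (phi : {linear 'M[C]_n -> 'M[C]_m}) (phis : 'M[C]_m -> 'M[C]_n).
Hypotheses (phi_pos : positive_map phi) (phis_adj : hs_adjoint phi phis).

Let phis_pos := hs_adjoint_pos phi_pos phis_adj.
Let phis_herm := hs_adjoint_herm phi_pos phis_adj.
Let tr_phis := mxtrace_hs_adjoint phi_pos phis_adj.

Lemma gen_schwarz_mpinv_trace_ineq : gen_schwarz phi -> mpinv_trace_ineq phis.
Proof.
move=> schwarz K X hX kerXK.
have hP := phis_pos hX.
set G := phis K; set B := mpinv (phis X); set t := \tr (G ^t* *m B *m G).
have [_ BPB _ _] : penrose (phis X) B := mpinvP hP.
have B_herm : B ^t* = B := penrose_herm (psd_herm hP) (mpinvP hP).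
have := mxtrace_psdM_ge0 (schwarz (G ^t* *m B)) (psd_schur_block hX kerXK).
rewrite mulmx_block mxtrace_block !mxtraceD !mulmxN !mxtraceN.
have -> : \tr (phi 1%:M *m (K ^t* *m mpinv X *m K)) = \tr (phis (K ^t* *m mpinv X *m K)).
  by rewrite mxtrace_mulC tr_phis mulmx1.
have -> : \tr (phi (G ^t* *m B) *m K) = t by rewrite mxtrace_mulC tr_phis mxtrace_mulC.
have -> : \tr ((phi (G ^t* *m B)) ^t* *m K ^t*) = t.
  rewrite -(positive_map_herm phi_pos) trmxC_mul trmxCK B_herm mxtrace_mulC tr_phis.
  by rewrite phis_herm mulmxA.
have -> : \tr (phi ((G ^t* *m B) ^t* *m (G ^t* *m B)) *m X) = t.
  rewrite mxtrace_mulC tr_phis trmxC_mul trmxCK B_herm mxtrace_mulC.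
  transitivity (\tr ((B *m G) *m (G ^t* *m B *m phis X))); first by rewrite !mulmxA.
  by rewrite mxtrace_mulC !mulmxA -(mulmxA (G ^t*) B) -(mulmxA (G ^t*)) BPB.
by rewrite addNr addr0 subr_ge0.
Qed.

Lemma gen_schwarz_sesq (K : 'M[C]_n) (x y : 'cV[C]_m) :
  sesq (block_mx (phi 1%:M) (phi K) ((phi K) ^t*) (phi (K ^t* *m K)))
       (col_mx x y) (col_mx x y) =
  \tr (phis (x *m x ^t*)) + (\tr ((phis (x *m y ^t*)) ^t* *m K))^* +
  \tr ((phis (x *m y ^t*)) ^t* *m K) +
  \tr (K *m phis (y *m y ^t*) *m K ^t*).
Proof.
rewrite sesq_block sesq_trmxC !(sesq_hs_adjoint phi_pos phis_adj) mulmx1.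
by rewrite -phis_herm trmxC_mul trmxCK mulmxA [\tr (_ *m K ^t* *m K)]mxtrace_mulC mulmxA.
Qed.

Lemma mpinv_trace_ineq_rank1_reg (x y : 'cV[C]_m) e :
  mpinv_trace_ineq phis -> 0 < e ->
  \tr (phis (x *m y ^t*) *m mpinv (phis (y *m y ^t*) + e *: phis 1%:M) *m
       (phis (x *m y ^t*)) ^t*) <= \tr (phis (x *m x ^t*)).
Proof.
move=> ineq e_gt0.
have phisX : phis (y *m y ^t* + e *: 1%:M) = phis (y *m y ^t*) + e *: phis 1%:M.
  by rewrite (hs_adjointD phis_adj) (hs_adjointZ phis_adj).
have phis_yx : phis (y *m x ^t*) = (phis (x *m y ^t*)) ^t*.
  by rewrite -phis_herm trmxC_mul trmxCK.
have := ineq _ _ (psd_rank1_reg y e_gt0) (rank1_reg_ker x e_gt0).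
rewrite rank1_reg_mpinv // phisX phis_yx trmxCK (hs_adjointZ phis_adj) mxtraceZ.
move=> /le_trans; apply; rewrite ler_piMl //; first exact/mxtrace_psd_ge0/phis_pos/psd_rank1.
by rewrite ler_pdivrMr ?rank1_reg_gt0 // mul1r lerDl ltW.
Qed.

Lemma mpinv_trace_ineq_gen_schwarz : mpinv_trace_ineq phis -> gen_schwarz phi.
Proof.
move=> ineq K v; rewrite -/(sesq _ v v) -(vsubmxK v) gen_schwarz_sesq.
set x := usubmx v; set y := dsubmx v.
have hP1 := phis_pos (@psd1 C m); have hR := phis_pos (psd_rank1 y).
apply: (ge0_addr_eps (mxtrace_sandwich_ge0 K hP1)) => e e_gt0.
have hS := psdD hR (psdZ (ltW e_gt0) hP1).
have kerSH (w : 'cV[C]_n) :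
    (phis (y *m y ^t*) + e *: phis 1%:M) *m w = 0 -> phis (x *m y ^t*) *m w = 0.
  move=> /(psd_ker_addr hR (psdZ (ltW e_gt0) hP1)).
  rewrite -scalemxAl => /eqP; rewrite scaler_eq0 gt_eqF //= => /eqP.
  exact: (hs_adjoint_ker phi_pos phis_adj _).
have := schur_mxtrace_ge0 K hS kerSH.
rewrite mulmxDr mulmxDl mxtraceD -scalemxAr -scalemxAl mxtraceZ => /le_trans; apply.
set T1 := \tr (phis (x *m x ^t*)); set U := \tr (K *m phis _ *m K ^t*).
set t0 := \tr (K *m phis 1%:M *m K ^t*); set T := \tr (_ ^t* *m K).
set D := \tr (_ *m mpinv _ *m _).
have -> : T1 + T^* + T + U + e * t0 = U + e * t0 + T + T^* + D + (T1 - D) by ring.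
by rewrite lerDl subr_ge0; apply: mpinv_trace_ineq_rank1_reg.
Qed.

End GenSchwarz.

Unset Implicit Arguments.

Theorem theorem1p3 (C : numClosedFieldType) (n m : nat)
  (phi : {linear 'M[C]_n -> 'M[C]_m}) (phis : 'M[C]_m -> 'M[C]_n) :
  positive_map phi -> hs_adjoint phi phis ->
  (gen_schwarz phi <->
   (forall K X : 'M[C]_m, psdmx X ->
      (forall v : 'cV[C]_m, X *m v = 0 -> K ^t* *m v = 0) ->
      \tr ((phis K) ^t* *m mpinv (phis X) *m phis K)
        <= \tr (phis (K ^t* *m mpinv X *m K)))).
Proof.
move=> phi_pos phis_adj; split.
- exact: gen_schwarz_mpinv_trace_ineq.
- exact: mpinv_trace_ineq_gen_schwarz.
Qed.
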